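(* Let $(G,J)$ be a non-abelian complex Lie group with Lie algebra $(\mathfrak g,\mu)$. If $(G,J)$ admits a left-invariant static metric, then $\mu(\mathfrak g,\mathfrak g)=\mathfrak g$. In particular, if $G$ is (non-abelian and) solvable, it admits no left-invariant static metric.
   Context: A complex Lie group $(G,J)$ is a real Lie group with bi-invariant complex structure $J$; $\mathfrak g^{1,0}=\{X\in\mathfrak g\otimes\mathbb C:JX=iX\}$. For a left-invariant Hermitian metric $g$ the torsion-twisted Chern–Ricci tensor is given, for a left-invariant holomorphic frame $Z_1,\dots,Z_n$ of $\mathfrak g^{1,0}$, by $\Theta(g)(Z_i,\bar Z_j)=\tfrac12 g^{k\bar l}g^{r\bar s}\,g(Z_i,\mu(\bar Z_l,\bar Z_s))\,g(\mu(Z_k,Z_r),\bar Z_j)$ (summation convention, $g$ extended complex-bilinearly). A Hermitian metric $g$ is static (for the positive Hermitian curvature flow) if $\Theta(g)=\lambda g$ for some $\lambda\in\mathbb R$. *)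

From HB Require Import structures.
From mathcomp Require Import all_boot all_order all_algebra.
From mathcomp Require Import complex.
Set Implicit Arguments. Unset Strict Implicit. Unset Printing Implicit Defensive.
Import Order.TTheory GRing.Theory Num.Theory.
Local Open Scope ring_scope.

(* The holomorphic part g^{1,0} of the Lie algebra of a complex Lie group (G,J)
   of complex dimension n is modelled as C^n = 'rV[C]_n with a complex Lie
   bracket mu.  Z_i := the i-th standard basis vector is a left-invariant
   holomorphic frame; mu (Z k) (Z r) has coordinates c_{kr}^m, and
   mu(Zbar_l, Zbar_s) = conj(c_{ls}^m) Zbar_m. *)

Section LieDefs.
Variables (C : numClosedFieldType) (n : nat).

Definition frame (i : 'I_n) : 'rV[C]_n := delta_mx 0 i.

Definition is_lie_bracket (mu : 'rV[C]_n -> 'rV[C]_n -> 'rV[C]_n) : Prop :=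
  [/\ (forall (a : C) x y z, mu (a *: x + y) z = a *: mu x z + mu y z),
      (forall (a : C) x y z, mu x (a *: y + z) = a *: mu x y + mu x z),
      (forall x, mu x x = 0) &
      (forall x y z, mu x (mu y z) + mu y (mu z x) + mu z (mu x y) = 0)].

Definition abelian_bracket (mu : 'rV[C]_n -> 'rV[C]_n -> 'rV[C]_n) : Prop :=
  forall x y, mu x y = 0.

(* A left-invariant Hermitian metric g, given by the matrix H i j = g(Z_i, Zbar_j). *)
Definition hermitian_metric (H : 'M[C]_n) : Prop :=
  (forall i j, H j i = (H i j)^*) /\
  (forall v : 'rV[C]_n, v != 0 -> 0 < (v *m H *m (map_mx Num.conj v)^T) 0 0).

(* g^{k lbar}, characterised by g^{k lbar} g_{m lbar} = delta_{km} *)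
Definition ginv (H : 'M[C]_n) (k l : 'I_n) : C := invmx H l k.

Definition sconst (mu : 'rV[C]_n -> 'rV[C]_n -> 'rV[C]_n) (k r m : 'I_n) : C :=
  mu (frame k) (frame r) 0 m.

(* Theta(g)(Z_i, Zbar_j) =
   1/2 g^{k lbar} g^{r sbar} g(Z_i, mu(Zbar_l, Zbar_s)) g(mu(Z_k, Z_r), Zbar_j) *)
Definition Theta (mu : 'rV[C]_n -> 'rV[C]_n -> 'rV[C]_n) (H : 'M[C]_n)
    (i j : 'I_n) : C :=
  2^-1 * \sum_(k < n) \sum_(l < n) \sum_(r < n) \sum_(s < n)
    (ginv H k l * ginv H r s
     * (\sum_(m < n) (sconst mu l s m)^* * H i m)
     * (\sum_(m < n) sconst mu k r m * H m j)).

Definition static_metric (mu : 'rV[C]_n -> 'rV[C]_n -> 'rV[C]_n) (H : 'M[C]_n) : Prop :=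
  hermitian_metric H /\
  exists2 lambda : C, lambda \is Num.real & forall i j, Theta mu H i j = lambda * H i j.

Definition derived_space (mu : 'rV[C]_n -> 'rV[C]_n -> 'rV[C]_n) : {vspace 'rV[C]_n} :=
  (\sum_(i < n) \sum_(j < n) <[mu (frame i) (frame j)]>)%VS.

Fixpoint derived_series (mu : 'rV[C]_n -> 'rV[C]_n -> 'rV[C]_n) (k : nat)
    : {vspace 'rV[C]_n} :=
  match k with
  | 0 => fullv
  | k.+1 => let V := derived_series mu k in
      (\sum_(i < \dim V) \sum_(j < \dim V)
         <[mu (tnth (vbasis V) i) (tnth (vbasis V) j)]>)%VS
  end.

Definition solvable_bracket (mu : 'rV[C]_n -> 'rV[C]_n -> 'rV[C]_n) : Prop :=
  exists k, derived_series mu k = 0%VS.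

End LieDefs.

(* If the derived algebra mu(g, g) is proper, pick W <> 0 annihilating it.
   Every term of Theta(g) ends with g(mu(Z_k, Z_r), .), so Theta(g) kills
   g^-1 W, whereas Theta(g) = lambda g sends it to lambda W: hence lambda = 0.
   Writing g^-1 = Q^* Q with Q invertible, Theta(g)(Z_j, Zbar_j) is half the
   squared Frobenius norm of Q F_j Q^T, where F_j is the matrix of the
   g(mu(Z_k, Z_r), Zbar_j); so Theta(g) = 0 forces mu = 0.  If moreover
   mu(g, g) = g, every term of the derived series is g, so g is not solvable. *)

Set Warnings "-notation-overridden,-ambiguous-paths,-notation-incompatible-prefix".
From HB Require Import structures.
From mathcomp Require Import all_boot all_order all_algebra.
From mathcomp Require Import complex.
From mathcomp Require Import sesquilinear spectral.
Set Implicit Arguments. Unset Strict Implicit. Unset Printing Implicit Defensive.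
Import Order.TTheory GRing.Theory Num.Theory.
Local Open Scope ring_scope.
Local Open Scope sesquilinear_scope.

Section HermitianMetric.
Variables (C : numClosedFieldType) (n : nat).
Implicit Types (H Q P : 'M[C]_n) (f : 'I_n -> 'I_n -> C).

Lemma hermitian_metric_trmxC H : hermitian_metric H -> H^t* = H.
Proof. by case=> hH _; apply/matrixP=> i j; rewrite !mxE hH conjCK. Qed.

Lemma hermitian_metric_spectralE H : hermitian_metric H ->
  H = (spectralmx H)^t* *m diag_mx (spectral_diag H) *m spectralmx H.
Proof.
move/hermitian_metric_trmxC=> Ht.
have /orthomx_spectralP : H \is normalmx by apply/normalmxP; rewrite Ht.
by rewrite invmx_unitary ?spectral_unitarymx.
Qed.

Lemma hermitian_metric_spectral_diag_gt0 H i :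
  hermitian_metric H -> 0 < spectral_diag H 0 i.
Proof.
move=> Hmetric; have HE := hermitian_metric_spectralE Hmetric.
set M := spectralmx H in HE; set d := spectral_diag H in HE *.
have uM : M \is unitarymx := spectral_unitarymx H.
have v0 : (delta_mx 0 i : 'rV_n) *m M != 0.
  rewrite mulmx_free_eq0 ?row_free_unit ?spectral_unit //.
  by apply/eqP=> /matrixP/(_ 0 i)/eqP; rewrite !mxE !eqxx oner_eq0.
have := Hmetric.2 _ v0.
rewrite HE map_mxM trmx_mul map_trmx map_delta_mx !mulmxA !mulmxtVK //.
by rewrite -rowE row_diag_mx -scalemxAl trmx_delta mul_delta_mx !mxE !eqxx mulr1.
Qed.

Lemma hermitian_metric_invmx_factor H : hermitian_metric H ->
  H \in unitmx /\ exists2 Q, Q \in unitmx & invmx H = Q^t* *m Q.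
Proof.
move=> Hmetric; have HE := hermitian_metric_spectralE Hmetric.
set M := spectralmx H in HE; set d := spectral_diag H in HE.
have uM : M \is unitarymx := spectral_unitarymx H.
pose Q := diag_mx (\row_j sqrtC (d 0 j)^-1) *m M.
have HQQ : H *m (Q^t* *m Q) = 1%:M.
  rewrite HE /Q trmx_mul map_mxM tr_diag_mx map_diag_mx !mulmxA mulmxtVK //.
  rewrite -!mulmxA (mulmxA (diag_mx _)) mulmx_diag (mulmxA (diag_mx d)) mulmx_diag.
  set r := \row_j _; have -> : r = const_mx 1.
    apply/rowP=> j; rewrite !mxE.
    have dj0 : 0 < d 0 j := hermitian_metric_spectral_diag_gt0 j Hmetric.
    change (d 0 j * ((sqrtC (d 0 j)^-1)^* * sqrtC (d 0 j)^-1) = 1).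
    rewrite geC0_conj ?sqrtC_ge0 ?invr_ge0 ?ltW // -expr2 sqrtCK mulfV //.
    exact: lt0r_neq0.
  by rewrite diag_const_mx mul_scalar_mx scale1r -invmx_unitary // mulVmx ?spectral_unit.
have [uH uQQ] := mulmx1_unit HQQ.
split=> //; exists Q; first by move: uQQ; rewrite unitmx_mul => /andP[].
by rewrite -[RHS]mul1mx -(mulVmx uH) -mulmxA HQQ mulmx1.
Qed.

Lemma quartic_sum_trace P f (F := \matrix_(k, r) f k r) :
  \sum_(k < n) \sum_(l < n) \sum_(r < n) \sum_(s < n)
    (P l k * P s r) * ((f l s)^* * f k r) =
  \tr (P^T *m (map_mx Num.conj F *m P *m F^T)).
Proof.
rewrite /mxtrace; apply: eq_bigr => k _; rewrite mxE; apply: eq_bigr => l _.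
rewrite !mxE mulr_sumr; apply: eq_bigr => r _.
rewrite !mxE mulr_suml mulr_sumr; apply: eq_bigr => s _.
by rewrite !mxE -!mulrA; congr (_ * _); rewrite mulrCA.
Qed.

Lemma quartic_sum_normE Q f (F := \matrix_(k, r) f k r) :
  \sum_(k < n) \sum_(l < n) \sum_(r < n) \sum_(s < n)
    ((Q^t* *m Q) l k * (Q^t* *m Q) s r) * ((f l s)^* * f k r) =
  \sum_(i < n) \sum_(j < n) `|(Q *m F *m Q^T) i j| ^+ 2.
Proof.
set B := Q *m F *m Q^T.
transitivity (\tr (map_mx Num.conj B *m B^T)).
  rewrite quartic_sum_trace /B trmx_mul -map_trmx trmxK !map_mxM !trmx_mul trmxK.
  by rewrite !mulmxA [in RHS]mxtrace_mulC !mulmxA map_trmx.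
by apply: eq_bigr => i _; rewrite mxE; apply: eq_bigr => j _; rewrite !mxE normCK mulrC.
Qed.

Lemma quartic_sum_eq0 Q f : Q \in unitmx ->
  \sum_(k < n) \sum_(l < n) \sum_(r < n) \sum_(s < n)
    ((Q^t* *m Q) l k * (Q^t* *m Q) s r) * ((f l s)^* * f k r) = 0 ->
  forall k r, f k r = 0.
Proof.
rewrite quartic_sum_normE => uQ sum0.
set F := \matrix_(k, r) f k r in sum0; set B := Q *m F *m Q^T in sum0.
have B0 : B = 0.
  apply/matrixP=> i j; rewrite [RHS]mxE.
  have ge0 i' j' : 0 <= `|B i' j'| ^+ 2 := exprn_ge0 _ (normr_ge0 _).
  have rowi0 := psumr_eq0P (fun i _ => sumr_ge0 _ (fun j _ => ge0 i j)) sum0 (i := i) isT.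
  have /eqP := psumr_eq0P (fun j _ => ge0 i j) rowi0 (i := j) isT.
  by rewrite expf_eq0 /= normr_eq0 => /eqP.
move: B0 => /(congr1 (fun X => invmx Q *m X *m invmx Q^T)).
rewrite /= /B !mulmxA mulVmx // mul1mx mulmxK ?unitmx_tr // mulmx0 mul0mx.
by move=> /matrixP F0 k r; have := F0 k r; rewrite !mxE.
Qed.

End HermitianMetric.

Section LieBracket.
Variables (C : numClosedFieldType) (n : nat) (mu : 'rV[C]_n -> 'rV[C]_n -> 'rV[C]_n).
Hypothesis mu_lie : is_lie_bracket mu.

Lemma lie_bracket0l z : mu 0 z = 0.
Proof.
have [muDl _ _ _] := mu_lie; have := muDl 1 0 0 z.
by rewrite !scale1r addr0 => /esym/eqP; rewrite -subr_eq0 addrK => /eqP.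
Qed.

Lemma lie_bracket0r z : mu z 0 = 0.
Proof.
have [_ muDr _ _] := mu_lie; have := muDr 1 z 0 0.
by rewrite !scale1r addr0 => /esym/eqP; rewrite -subr_eq0 addrK => /eqP.
Qed.

Lemma lie_bracket_suml (I : finType) (a : I -> C) (x : I -> 'rV[C]_n) z :
  mu (\sum_i a i *: x i) z = \sum_i a i *: mu (x i) z.
Proof.
have [muDl _ _ _] := mu_lie.
apply: (big_ind2 (fun u v => mu u z = v)); first exact: lie_bracket0l.
  by move=> u1 v1 u2 v2 <- <-; have := muDl 1 u1 u2 z; rewrite !scale1r.
by move=> i _; rewrite -[_ *: _]addr0 muDl lie_bracket0l addr0.
Qed.

Lemma lie_bracket_sumr (I : finType) (a : I -> C) (x : I -> 'rV[C]_n) z :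
  mu z (\sum_i a i *: x i) = \sum_i a i *: mu z (x i).
Proof.
have [_ muDr _ _] := mu_lie.
apply: (big_ind2 (fun u v => mu z u = v)); first exact: lie_bracket0r.
  by move=> u1 v1 u2 v2 <- <-; have := muDr 1 z u1 u2; rewrite !scale1r.
by move=> i _; rewrite -[_ *: _]addr0 muDr lie_bracket0r addr0.
Qed.

Lemma lie_bracket_span m (b : 'I_m -> 'rV[C]_n) (a a' : 'I_m -> C) :
  mu (\sum_i a i *: b i) (\sum_j a' j *: b j)
    \in (\sum_(i < m) \sum_(j < m) <[mu (b i) (b j)]>)%VS.
Proof.
rewrite lie_bracket_suml; apply: memv_suml => i _; apply: memvZ.
rewrite lie_bracket_sumr; apply: memv_suml => j _; apply: memvZ.
by rewrite memvE (sumv_sup i) // (sumv_sup j) // -memvE memv_line.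
Qed.

Lemma memv_derived_space x y : mu x y \in derived_space mu.
Proof. by rewrite (row_sum_delta x) (row_sum_delta y); exact: lie_bracket_span. Qed.

Lemma abelian_bracket_frame :
  (forall i j, mu (frame C i) (frame C j) = 0) -> abelian_bracket mu.
Proof.
move=> frame0 x y; apply/eqP; rewrite -memv0.
apply: subvP (memv_derived_space x y); apply/subv_sumP => i _.
by apply/subv_sumP => j _; rewrite -memvE frame0 mem0v.
Qed.

Lemma derived_series_fullv :
  derived_space mu = fullv -> forall k, derived_series mu k = fullv.
Proof.
move=> Dfull; elim=> [//|k IHk] /=; rewrite IHk; apply/eqP.
rewrite eqEsubv subvf -{1}Dfull; apply/subv_sumP => i _; apply/subv_sumP => j _.
have vbasisE (x : 'rV[C]_n) : x = \sum_i coord (vbasis fullv) i x *: tnth (vbasis fullv) i.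
  by rewrite {1}(coord_vbasis (memvf x)); apply: eq_bigr => l _; rewrite (tnth_nth 0).
by rewrite -memvE (vbasisE (frame C i)) (vbasisE (frame C j)) lie_bracket_span.
Qed.

End LieBracket.

Lemma vspace_annihilator (K : fieldType) (n : nat) (V : {vspace 'rV[K]_n}) :
  V != fullv -> exists2 W : 'M[K]_n, W != 0 & forall u, u \in V -> u *m W = 0.
Proof.
move=> Vproper; pose Y := \matrix_(i < \dim V) (vbasis V)`_i.
have dimV : (\dim V < n)%N.
  rewrite ltnNge; apply: contra Vproper => dimV.
  by rewrite eqEdim subvf dimvf dim_matrix mul1r.
exists (cokermx Y).
  rewrite -mxrank_eq0 mxrank_coker subn_eq0 -ltnNge.
  exact: leq_ltn_trans (rank_leq_row Y) dimV.
move=> u /coord_vbasis ->; rewrite mulmx_suml big1 // => i _.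
have -> : (vbasis V)`_i = row i Y by rewrite rowK.
by rewrite -scalemxAl -row_mul mulmx_coker row0 scaler0.
Qed.

Section Theta.
Variables (C : numClosedFieldType) (n : nat) (mu : 'rV[C]_n -> 'rV[C]_n -> 'rV[C]_n).
Variable H : 'M[C]_n.
Hypothesis Hmetric : hermitian_metric H.

(* The j-th entry of [bracket_flat k r] is g(mu(Z_k, Z_r), Zbar_j). *)
Definition bracket_flat (k r : 'I_n) : 'rV[C]_n := mu (frame C k) (frame C r) *m H.

Lemma ThetaE i j : Theta mu H i j = 2^-1 *
  \sum_(k < n) \sum_(l < n) \sum_(r < n) \sum_(s < n)
    (invmx H l k * invmx H s r) * ((bracket_flat l s 0 i)^* * bracket_flat k r 0 j).
Proof.
have [Hherm _] := Hmetric.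
rewrite /Theta; congr (_ * _); apply: eq_bigr => k _; apply: eq_bigr => l _.
apply: eq_bigr => r _; apply: eq_bigr => s _; rewrite -mulrA !mxE rmorph_sum.
by congr (_ * (_ * _)); apply: eq_bigr => m _; rewrite rmorphM Hherm.
Qed.

Lemma Theta_mxE : \matrix_(i, j) Theta mu H i j = 2^-1 *:
  \sum_(k < n) \sum_(l < n) \sum_(r < n) \sum_(s < n)
    (invmx H l k * invmx H s r) *: ((bracket_flat l s)^t* *m bracket_flat k r).
Proof.
apply/matrixP=> i j; rewrite !mxE ThetaE summxE; congr (_ * _).
apply: eq_bigr => k _; rewrite summxE; apply: eq_bigr => l _; rewrite summxE.
apply: eq_bigr => r _; rewrite summxE; apply: eq_bigr => s _.
by rewrite !mxE big_ord1 !mxE.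
Qed.

Lemma Theta_mx_annihilator (W : 'M[C]_n) :
  (forall k r, mu (frame C k) (frame C r) *m W = 0) ->
  (\matrix_(i, j) Theta mu H i j) *m (invmx H *m W) = 0.
Proof.
have [uH _] := hermitian_metric_invmx_factor Hmetric.
move=> annW; rewrite Theta_mxE -scalemxAl; apply/eqP; rewrite scaler_eq0; apply/orP; right.
rewrite !mulmx_suml; apply/eqP/big1 => k _; rewrite !mulmx_suml; apply/big1 => l _.
rewrite !mulmx_suml; apply/big1 => r _; rewrite !mulmx_suml; apply/big1 => s _.
by rewrite -scalemxAl -mulmxA /bracket_flat -(mulmxA _ H) mulKVmx // annW mulmx0 scaler0.
Qed.

Lemma Theta_diag_eq0 :
  (forall j, Theta mu H j j = 0) -> forall k r, mu (frame C k) (frame C r) = 0.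
Proof.
have [uH [Q uQ HQ]] := hermitian_metric_invmx_factor Hmetric.
move=> Theta0 k r; have flat0 : bracket_flat k r = 0.
  apply/rowP=> j; have /eqP := Theta0 j; rewrite ThetaE mulf_eq0 invr_eq0 pnatr_eq0 /=.
  by rewrite HQ [RHS]mxE => /eqP /(quartic_sum_eq0 uQ); apply.
by move: flat0 => /(congr1 (mulmx^~ (invmx H))); rewrite mulmxK // mul0mx.
Qed.

End Theta.

Lemma static_metric_derived_fullv (C : numClosedFieldType) (n : nat)
    (mu : 'rV[C]_n -> 'rV[C]_n -> 'rV[C]_n) (H : 'M[C]_n) :
  is_lie_bracket mu -> ~ abelian_bracket mu -> static_metric mu H ->
  derived_space mu = fullv.
Proof.
move=> mu_lie nonabelian [Hmetric [lambda _ ThetaH]].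
have [uH _] := hermitian_metric_invmx_factor Hmetric.
case: (eqVneq (derived_space mu) fullv) => // Dproper; exfalso.
have [W W0 annW] := vspace_annihilator Dproper.
have lambda0 : lambda = 0.
  have := Theta_mx_annihilator Hmetric (fun k r => annW _ (memv_derived_space mu_lie _ _)).
  have -> : \matrix_(i, j) Theta mu H i j = lambda *: H.
    by apply/matrixP=> i j; rewrite !mxE ThetaH.
  by rewrite -scalemxAl mulKVmx // => /eqP; rewrite scaler_eq0 (negbTE W0) orbF => /eqP.
apply/nonabelian/(abelian_bracket_frame mu_lie)/(Theta_diag_eq0 Hmetric) => j.
by rewrite ThetaH lambda0 mul0r.
Qed.

Local Close Scope sesquilinear_scope.

Theorem proposition2p5 (R : rcfType) (n : nat)
    (mu : 'rV[R[i]]_n -> 'rV[R[i]]_n -> 'rV[R[i]]_n) :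
  is_lie_bracket mu -> ~ abelian_bracket mu ->
  (forall H : 'M[R[i]]_n, static_metric mu H -> derived_space mu = fullv%VS) /\
  (solvable_bracket mu -> forall H : 'M[R[i]]_n, ~ static_metric mu H).
Proof.
move=> mu_lie nonabelian.
have Dfull H := @static_metric_derived_fullv _ _ mu H mu_lie nonabelian.
split=> // -[k Dk] H /Dfull /(derived_series_fullv mu_lie) /(_ k).
rewrite Dk => fullv0; apply: nonabelian => x y.
by apply/eqP; rewrite -memv0 fullv0 memvf.
Qed.
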